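(* The extended metric space of finitely presented $n$-parameter persistence modules equipped with the interleaving distance $d_I$ is a path metric space.
   Context: Persistence modules are functors from $(\mathbb{R}^n,\leq)$ to finite-dimensional vector spaces over a field (equivalently $\mathbb{R}^n$-graded modules over the monoid ring of $([0,\infty)^n,+)$); finitely presented means a quotient of a finitely generated free graded module by a finitely generated homogeneous submodule; modules are considered up to isomorphism. $M,N$ are $\varepsilon$-interleaved if there are natural families $f_{\vec a}:M_{\vec a}\to N_{\vec a+\varepsilon\vec1}$, $g_{\vec a}:N_{\vec a}\to M_{\vec a+\varepsilon\vec1}$ whose composites $g\circ f$, $f\circ g$ are the internal maps $M(\vec a\le\vec a+2\varepsilon\vec1)$, $N(\vec a\le\vec a+2\varepsilon\vec1)$; $d_I(M,N)$ is the infimum of such $\varepsilon\ge0$ (possibly $\infty$). A path metric space is an (extended) metric space in which the distance between any two points at finite distance equals the infimum of the lengths $\ell_d(\gamma)=\sup\sum_i d(\gamma(t_{i-1}),\gamma(t_i))$ (supremum over partitions of $[0,1]$) of continuous paths $\gamma:[0,1]\to X$ joining them. *)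

From HB Require Import structures.
From mathcomp Require Import all_boot all_order all_algebra.
From mathcomp Require Import all_classical all_reals.
From mathcomp Require Import ereal.

Set Implicit Arguments.
Unset Strict Implicit.
Unset Printing Implicit Defensive.

Import Order.TTheory GRing.Theory Num.Theory.
Local Open Scope ring_scope.
Local Open Scope classical_set_scope.

Section PersMod.
Variables (k : fieldType) (R : realType) (n : nat).

Definition pt := 'I_n -> R.

Definition vle (a b : pt) : bool := [forall i, a i <= b i].

Definition shift (a : pt) (e : R) : pt := fun i => a i + e.

(* M_a is represented as the row space k^(pdim a); the internal map
   M(a <= b) acts on row vectors by right multiplication by pmap a b.
   (pmap a b is irrelevant when a is not <= b.) *)
Record pmod := PMod {
  pdim : pt -> nat;
  pmap : forall a b : pt, 'M[k]_(pdim a, pdim b);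
  pmap_id : forall a, pmap a a = 1%:M;
  pmap_comp : forall a b c, vle a b -> vle b c ->
                pmap a b *m pmap b c = pmap a c
}.

Definition interleaved (M N : pmod) (e : R) : Prop :=
  0 <= e /\
  exists (f : forall a, 'M[k]_(pdim M a, pdim N (shift a e)))
         (g : forall a, 'M[k]_(pdim N a, pdim M (shift a e))),
    [/\ (forall a b, vle a b ->
           f a *m pmap N (shift a e) (shift b e) = pmap M a b *m f b),
        (forall a b, vle a b ->
           g a *m pmap M (shift a e) (shift b e) = pmap N a b *m g b),
        (forall a, f a *m g (shift a e) = pmap M a (shift (shift a e) e)) &
        (forall a, g a *m f (shift a e) = pmap N a (shift (shift a e) e))].

Definition dI (M N : pmod) : \bar R :=
  ereal_inf [set (e%:E)%E | e in [set e | interleaved M N e]].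

(* Finitely presented: there is a natural surjection phi : F -> M from the
   free module F on finitely many generators (grades g i, images x i in
   M_(g i)), whose kernel is generated by finitely many homogeneous elements
   (grades r j, coordinates c j in F_(r j)).  F_a is modelled as the
   subspace of k^p spanned by the e_i with g i <= a, with inclusions as
   internal maps; phi_a is the matrix Phi a. *)
Definition fin_pres (M : pmod) : Prop :=
  exists (p q : nat) (g : 'I_p -> pt) (x : forall i : 'I_p, 'rV[k]_(pdim M (g i)))
         (r : 'I_q -> pt) (c : 'I_q -> 'rV[k]_p),
    let Phi (a : pt) : 'M[k]_(p, pdim M a) :=
      \matrix_(i < p, j < pdim M a)
        (if vle (g i) a then (x i *m pmap M (g i) a) 0 j else 0) in
    let Rel (a : pt) : 'M[k]_(q, p) :=
      \matrix_(j < q, i < p) (if vle (r j) a then c j 0 i else 0) in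
    [/\ (forall j i, c j 0 i != 0 -> vle (g i) (r j)),
        (forall a, row_full (Phi a)) &
        (forall a (v : 'rV[k]_p), (forall i, v 0 i != 0 -> vle (g i) a) ->
           (v *m Phi a = 0 <-> (v <= Rel a)%MS))].

Definition path_in (P : pmod -> Prop) (gam : R -> pmod) : Prop :=
  (forall t, 0 <= t <= 1 -> P (gam t)) /\
  (forall t, 0 <= t <= 1 -> forall eps : R, 0 < eps ->
     exists2 del : R, 0 < del &
       forall s, 0 <= s <= 1 -> `|s - t| < del -> (dI (gam s) (gam t) < eps%:E)%E).

Definition plength (gam : R -> pmod) : \bar R :=
  ereal_sup [set s | exists (m : nat) (t : nat -> R),
    [/\ t 0%N = 0, t m = 1, (forall i, (i < m)%N -> t i <= t i.+1) &
        s = (\sum_(0 <= i < m) dI (gam (t i)) (gam (t i.+1)))%E]].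

End PersMod.

From Pilot Require Import Defs.
From HB Require Import structures.
From mathcomp Require Import all_boot all_order all_algebra.
From mathcomp Require Import all_classical all_reals.
From mathcomp Require Import ereal.
From mathcomp Require Import ring lra.

(* Let f, g be an e-interleaving of M and N, both finitely presented.  For
   0 <= t <= 1 let P_t be presented by the generators of M raised by t e and
   those of N raised by (1 - t) e, subject to the relations of M and N (raised
   alike) and to the identification of every generator of M with its image
   under f, and of every generator of N with its image under g, both written
   in the generators of the other module.  P_s and P_t share one presentation
   up to grades moved by |s - t| e, so they are |s - t| e-interleaved; in the
   same way M and P_t are t e-interleaved and N and P_t are (1 - t) e-
   interleaved.  Thus t |-> P_t (with endpoints M and N) is an e-Lipschitz path
   of length at most e, while the trivial partition bounds the length of any
   path from below by d_I of its endpoints.  All these interleavings are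
   produced from coefficient matrices, i.e. images of generators, which only
   have to be checked on generators and relations. *)

Import Order.TTheory GRing.Theory Num.Theory.
Local Open Scope ring_scope.
Local Open Scope classical_set_scope.

(* Unqualified, [pmap] is [seq.pmap]. *)
Local Notation pmap := Defs.pmap.

Set Implicit Arguments.
Unset Strict Implicit.
Unset Printing Implicit Defensive.

(** * Grades and block indices *)

Section Grades.
Variables (R : realType) (n : nat).
Local Notation pt := (pt R n).

Lemma vleP (a b : pt) : reflect (forall i, a i <= b i) (vle a b).
Proof. exact: forallP. Qed.

Lemma vle_refl (a : pt) : vle a a.
Proof. by apply/vleP. Qed.

Lemma vle_trans (a b c : pt) : vle a b -> vle b c -> vle a c.
Proof. by move=> /vleP ab /vleP bc; apply/vleP => i; apply: le_trans (ab i) (bc i). Qed.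

Lemma vle_shift (a b : pt) (x y : R) : vle a b -> x <= y -> vle (shift a x) (shift b y).
Proof. by move=> /vleP ab xy; apply/vleP => i; apply: lerD. Qed.

Lemma vle_shiftr (a : pt) (x : R) : 0 <= x -> vle a (shift a x).
Proof. by move=> x0; apply/vleP => i; rewrite lerDl. Qed.

Lemma shiftD (a : pt) (x y : R) : shift (shift a x) y = shift a (x + y).
Proof. by apply/funext => i; rewrite /shift addrA. Qed.

Lemma vle_shiftl (a b : pt) (x y z : R) :
  vle a (shift b x) -> y + x <= z -> vle (shift a y) (shift b z).
Proof.
move=> /vle_shift /(_ (lexx y)); rewrite shiftD => ab yxz.
by apply: vle_trans ab (vle_shift (vle_refl b) _); rewrite addrC.
Qed.

End Grades.

Lemma split_ord_ind m1 m2 (P : 'I_(m1 + m2) -> Prop) :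
  (forall i, P (lshift m2 i)) -> (forall j, P (rshift m1 j)) -> forall l, P l.
Proof. by move=> Pl Pr l; rewrite -(fintype.splitK l); case: (fintype.split l). Qed.

Definition sum_fun T m1 m2 (f1 : 'I_m1 -> T) (f2 : 'I_m2 -> T) (l : 'I_(m1 + m2)) : T :=
  match fintype.split l with inl i => f1 i | inr j => f2 j end.

Lemma sum_fun_l T m1 m2 (f1 : 'I_m1 -> T) (f2 : 'I_m2 -> T) i :
  sum_fun f1 f2 (lshift m2 i) = f1 i.
Proof. by rewrite /sum_fun (unsplitK (inl _ i)). Qed.

Lemma sum_fun_r T m1 m2 (f1 : 'I_m1 -> T) (f2 : 'I_m2 -> T) j :
  sum_fun f1 f2 (rshift m1 j) = f2 j.
Proof. by rewrite /sum_fun (unsplitK (inr _ j)). Qed.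

(** * Presentations *)

Section Presentations.
Variables (k : fieldType) (R : realType) (n : nat).
Local Notation pt := (pt R n).
Local Notation pmod := (pmod k R n).

Definition mask_mx p (g : 'I_p -> pt) (a : pt) : 'M[k]_p :=
  diag_mx (\row_i (vle (g i) a)%:R).

Lemma mask_mxE p (g : 'I_p -> pt) a m (V : 'M[k]_(p, m)) i j :
  (mask_mx g a *m V) i j = if vle (g i) a then V i j else 0.
Proof. by rewrite mul_diag_mx !mxE; case: ifP; rewrite ?mul1r ?mul0r. Qed.

Lemma row_mask_mx p (g : 'I_p -> pt) a m (V : 'M[k]_(p, m)) i :
  row i (mask_mx g a *m V) = if vle (g i) a then row i V else 0.
Proof. by apply/rowP => j; rewrite [LHS]mxE mask_mxE; case: ifP; rewrite !mxE. Qed.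

Lemma mask_mx_idr p (g : 'I_p -> pt) a m (V : 'M[k]_(m, p)) :
  (forall i l, V i l != 0 -> vle (g l) a) -> V *m mask_mx g a = V.
Proof.
move=> Vg; apply/matrixP => i l; rewrite mul_mx_diag !mxE.
by have [->|/Vg ->] := eqVneq (V i l) 0; rewrite ?mul0r ?mulr1.
Qed.

Lemma mask_mx_supp p (g : 'I_p -> pt) a m (V : 'M[k]_(m, p)) i l :
  V *m mask_mx g a = V -> V i l != 0 -> vle (g l) a.
Proof. by move=> <-; rewrite mul_mx_diag !mxE; case: (vle _ a); rewrite // mulr0 eqxx. Qed.

Lemma mask_mx_mono p (g : 'I_p -> pt) a b :
  vle a b -> mask_mx g a *m mask_mx g b = mask_mx g a.
Proof.
move=> ab; rewrite mulmx_diag; congr diag_mx; apply/rowP => i; rewrite !mxE.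
by case: (boolP (vle _ a)) => [gi|_]; rewrite ?mul0r // (vle_trans gi ab) mulr1.
Qed.

Lemma mask_mx_id p (g : 'I_p -> pt) a : mask_mx g a *m mask_mx g a = mask_mx g a.
Proof. exact/mask_mx_mono/vle_refl. Qed.

Lemma row_mask_mx_id p (g : 'I_p -> pt) i m (V : 'M[k]_(p, m)) :
  row i (mask_mx g (g i) *m V) = row i V.
Proof. by rewrite row_mask_mx vle_refl. Qed.

Lemma mx1_nz p (i l : 'I_p) : (1%:M : 'M[k]_p) i l != 0 -> l = i.
Proof. by rewrite mxE; case: (eqVneq i l) => [->|_]; rewrite ?mulr0n ?eqxx. Qed.

Lemma delta_nz p (i l : 'I_p) : ('e_i : 'rV[k]_p) 0 l != 0 -> l = i.
Proof. by rewrite mxE; case: (l =P i) => // _; rewrite andbF eqxx. Qed.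

Lemma row_1B p m (i : 'I_p) (X : 'M[k]_(p, m)) (Y : 'M[k]_(m, p)) :
  row i (1%:M - X *m Y) = 'e_i - row i X *m Y.
Proof. by rewrite rowE mulmxBr mulmx1 mulmxA -rowE. Qed.

Definition gen_mx (M : pmod) p (g : 'I_p -> pt) (x : forall i, 'rV[k]_(pdim M (g i)))
    (a : pt) : 'M[k]_(p, pdim M a) :=
  \matrix_(i < p, j < pdim M a) (if vle (g i) a then (x i *m pmap M (g i) a) 0 j else 0).
Arguments gen_mx M {p} g x a.

Definition rel_mx q p (r : 'I_q -> pt) (c : 'I_q -> 'rV[k]_p) (a : pt) : 'M[k]_(q, p) :=
  \matrix_(j < q, i < p) (if vle (r j) a then c j 0 i else 0).

Definition is_pres (M : pmod) p q (g : 'I_p -> pt) (x : forall i, 'rV[k]_(pdim M (g i)))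
    (r : 'I_q -> pt) (c : 'I_q -> 'rV[k]_p) :=
  [/\ (forall j i, c j 0 i != 0 -> vle (g i) (r j)),
      (forall a, row_full (gen_mx M g x a)) &
      (forall a (v : 'rV[k]_p), (forall i, v 0 i != 0 -> vle (g i) a) ->
         (v *m gen_mx M g x a = 0 <-> (v <= rel_mx r c a)%MS))].
Arguments is_pres M {p q} g x r c.

Lemma fin_presP (M : pmod) :
  fin_pres M <-> exists p q g x r c, @is_pres M p q g x r c.
Proof. by split; case=> p [q [g [x [r [c Mp]]]]]; exists p, q, g, x, r, c. Qed.

Lemma row_gen_mx (M : pmod) p g x a i :
  row i (@gen_mx M p g x a) = if vle (g i) a then x i *m pmap M (g i) a else 0.
Proof. by apply/rowP => j; rewrite !mxE; case: ifP => //; rewrite mxE. Qed.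

Lemma row_rel_mx q p r c a j :
  row j (@rel_mx q p r c a) = if vle (r j) a then c j else 0.
Proof. by apply/rowP => i; rewrite !mxE; case: ifP => //; rewrite mxE. Qed.

Lemma mask_gen_mx (M : pmod) p g x a : mask_mx g a *m @gen_mx M p g x a = gen_mx M g x a.
Proof. by apply/row_matrixP => i; rewrite row_mask_mx; case: ifP => gi; rewrite // row_gen_mx gi. Qed.

Lemma gen_mx_push (M : pmod) p g x a b : vle a b ->
  @gen_mx M p g x a *m pmap M a b = mask_mx g a *m gen_mx M g x b.
Proof.
move=> ab; apply/row_matrixP => i; rewrite row_mul row_mask_mx !row_gen_mx.
case: ifP => gi; last by rewrite mul0mx.
by rewrite (vle_trans gi ab) -mulmxA (pmap_comp _ gi ab).
Qed.

Lemma gen_mx_push_mask (M : pmod) p g x a b m (V : 'M[k]_(m, p)) :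
  V *m mask_mx g a = V -> vle a b ->
  V *m @gen_mx M p g x a *m pmap M a b = V *m gen_mx M g x b.
Proof. by move=> Va ab; rewrite -mulmxA gen_mx_push // mulmxA Va. Qed.

Section Presented.
Variables (M : pmod) (p q : nat) (g : 'I_p -> pt) (x : forall i, 'rV[k]_(pdim M (g i)))
  (r : 'I_q -> pt) (c : 'I_q -> 'rV[k]_p).
Hypothesis Mp : is_pres M g x r c.

Lemma pres_full a : row_full (gen_mx M g x a).
Proof. by case: Mp. Qed.

Lemma pres_rel_mask j a : vle (r j) a -> c j *m mask_mx g a = c j.
Proof.
case: Mp => cg _ _ ja; apply: mask_mx_idr => i l; rewrite [i]ord1 => /cg lj.
exact: vle_trans lj ja.
Qed.

Lemma pres_rel j a : vle (r j) a -> c j *m gen_mx M g x a = 0.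
Proof.
case: Mp => cg _ ker ja; apply/(ker a (c j)).
  by move=> i /cg ij; apply: vle_trans ij ja.
by have := row_rel_mx r c a j; rewrite ja => <-; apply: row_sub.
Qed.

Lemma pres_kernel m (V : 'M[k]_(m, p)) a :
  V *m mask_mx g a = V -> V *m gen_mx M g x a = 0 -> (V <= rel_mx r c a)%MS.
Proof.
case: Mp => _ _ ker Va VP; apply/row_subP => i; apply/(ker a).
  by move=> l; rewrite mxE; apply: mask_mx_supp Va.
by rewrite -row_mul VP row0.
Qed.

End Presented.

(** * Morphisms and interleavings given by coefficient matrices *)

Section CoefMorphism.
Variables (M N : pmod) (p q p' : nat) (g : 'I_p -> pt) (x : forall i, 'rV[k]_(pdim M (g i)))
  (r : 'I_q -> pt) (c : 'I_q -> 'rV[k]_p)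
  (g' : 'I_p' -> pt) (x' : forall l, 'rV[k]_(pdim N (g' l))) (e : R) (U : 'M[k]_(p, p')).
Hypotheses (Mp : is_pres M g x r c)
  (U_supp : forall i l, U i l != 0 -> vle (g' l) (shift (g i) e))
  (U_rel : forall j, c j *m U *m gen_mx N g' x' (shift (r j) e) = 0).

Lemma mask_coef_mask a : mask_mx g a *m U *m mask_mx g' (shift a e) = mask_mx g a *m U.
Proof.
apply: mask_mx_idr => i l; rewrite mask_mxE; case: ifP => [gi Uil|_]; last by rewrite eqxx.
exact: vle_trans (U_supp Uil) (vle_shift gi (lexx e)).
Qed.

(* Row i of U expresses the image of the i-th generator of M in the generators
   of N; [coef_mor] is the morphism from M to N shifted by e that it induces. *)
Definition coef_mor a : 'M[k]_(pdim M a, pdim N (shift a e)) :=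
  pinvmx (gen_mx M g x a) *m (mask_mx g a *m U *m gen_mx N g' x' (shift a e)).

Lemma rel_mx_coef a : rel_mx r c a *m (mask_mx g a *m U *m gen_mx N g' x' (shift a e)) = 0.
Proof.
apply/row_matrixP => j; rewrite row_mul row_rel_mx row0.
case: ifPn => ja; last by rewrite mul0mx.
have cU : c j *m U *m mask_mx g' (shift (r j) e) = c j *m U.
  rewrite -(pres_rel_mask Mp (vle_refl (r j))) -!mulmxA (mulmxA (mask_mx _ _)) mask_coef_mask.
  by rewrite mulmxA.
rewrite !mulmxA (pres_rel_mask Mp ja).
by rewrite -(gen_mx_push_mask x' cU (vle_shift ja (lexx e))) U_rel mul0mx.
Qed.

Lemma gen_mx_coef_mor a :
  gen_mx M g x a *m coef_mor a = mask_mx g a *m U *m gen_mx N g' x' (shift a e).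
Proof.
set P := gen_mx M g x a; set Y := _ *m gen_mx N g' x' _.
have maskP : mask_mx g a *m P = P by apply: mask_gen_mx.
have maskY : mask_mx g a *m Y = Y by rewrite /Y !mulmxA mask_mx_id.
(* [pinvmx P] is only a one-sided inverse of [P], but the defect
   [P *m pinvmx P - 1] is a relation and is therefore killed by [Y]. *)
pose V := mask_mx g a *m (P *m pinvmx P - 1%:M) *m mask_mx g a.
have VP : V *m P = 0.
  by rewrite /V -mulmxA maskP -mulmxA mulmxBl mul1mx mulmxKpV // subrr mulmx0.
have /submxP [D VD] : (V <= rel_mx r c a)%MS.
  by apply: (pres_kernel Mp) VP; rewrite /V -mulmxA mask_mx_id.
have : V *m Y = 0 by rewrite VD -mulmxA rel_mx_coef mulmx0.
rewrite /V -mulmxA maskY -mulmxA mulmxBl mul1mx mulmxBr maskY !mulmxA maskP.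
by move/eqP; rewrite subr_eq0 => /eqP.
Qed.

Lemma coef_mor_nat a b : vle a b ->
  coef_mor a *m pmap N (shift a e) (shift b e) = pmap M a b *m coef_mor b.
Proof.
move=> ab; apply: (row_full_inj (pres_full Mp a)).
rewrite mulmxA gen_mx_coef_mor -mulmxA gen_mx_push ?vle_shift // mulmxA mask_coef_mask.
rewrite mulmxA gen_mx_push // -[RHS]mulmxA gen_mx_coef_mor.
by rewrite !mulmxA mask_mx_mono.
Qed.

End CoefMorphism.

Section CoefComposition.
Variables (M N : pmod) (p q p' q' : nat)
  (g : 'I_p -> pt) (x : forall i, 'rV[k]_(pdim M (g i))) (r : 'I_q -> pt) (c : 'I_q -> 'rV[k]_p)
  (g' : 'I_p' -> pt) (x' : forall l, 'rV[k]_(pdim N (g' l))) (r' : 'I_q' -> pt)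
  (c' : 'I_q' -> 'rV[k]_p') (e : R) (U : 'M[k]_(p, p')) (W : 'M[k]_(p', p)).
Hypotheses (e0 : 0 <= e) (Mp : is_pres M g x r c) (Np : is_pres N g' x' r' c')
  (U_supp : forall i l, U i l != 0 -> vle (g' l) (shift (g i) e))
  (W_supp : forall l i, W l i != 0 -> vle (g i) (shift (g' l) e))
  (U_rel : forall j, c j *m U *m gen_mx N g' x' (shift (r j) e) = 0)
  (W_rel : forall j, c' j *m W *m gen_mx M g x (shift (r' j) e) = 0)
  (UW : forall i, row i (1%:M - U *m W) *m gen_mx M g x (shift (shift (g i) e) e) = 0).

Lemma mask_coef_comp_mask a :
  mask_mx g a *m (1%:M - U *m W) *m mask_mx g (shift (shift a e) e) =
  mask_mx g a *m (1%:M - U *m W).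
Proof.
have a2e : vle a (shift (shift a e) e) by rewrite shiftD vle_shiftr ?addr_ge0.
rewrite mulmxBr mulmx1 mulmxBl mask_mx_mono //; congr (_ - _).
rewrite !mulmxA -(mask_coef_mask U_supp) -[_ *m W]mulmxA -[_ *m mask_mx g _]mulmxA.
by rewrite (mask_coef_mask W_supp).
Qed.

Lemma coef_mor_comp a :
  coef_mor x x' e U a *m coef_mor x' x e W (shift a e) = pmap M a (shift (shift a e) e).
Proof.
have a2e : vle a (shift (shift a e) e) by rewrite shiftD vle_shiftr ?addr_ge0.
suff Z : mask_mx g a *m (1%:M - U *m W) *m gen_mx M g x (shift (shift a e) e) = 0.
  apply: (row_full_inj (pres_full Mp a)).
  rewrite mulmxA (gen_mx_coef_mor Mp U_supp U_rel) gen_mx_push //.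
  rewrite -(mask_coef_mask U_supp) -mulmxA (gen_mx_coef_mor Np W_supp W_rel) !mulmxA.
  rewrite !(mask_coef_mask U_supp).
  by move/eqP: Z; rewrite mulmxBr mulmx1 mulmxBl subr_eq0 !mulmxA => /eqP <-.
apply/row_matrixP => i; rewrite row0 row_mul row_mask_mx.
case: ifPn => [gi|_]; last by rewrite mul0mx.
have supp_row : row i (1%:M - U *m W) *m mask_mx g (shift (shift (g i) e) e) =
                row i (1%:M - U *m W).
  by rewrite -[in LHS](@row_mask_mx_id _ g) -row_mul mask_coef_comp_mask row_mask_mx_id.
by rewrite -(gen_mx_push_mask x supp_row (vle_shift (vle_shift gi (lexx e)) (lexx e))) UW mul0mx.
Qed.

End CoefComposition.

Lemma coef_interleaved (M N : pmod) p q p' q'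
    (g : 'I_p -> pt) x (r : 'I_q -> pt) c (g' : 'I_p' -> pt) x' (r' : 'I_q' -> pt) c'
    (e : R) (U : 'M[k]_(p, p')) (W : 'M[k]_(p', p)) :
  0 <= e -> is_pres M g x r c -> is_pres N g' x' r' c' ->
  (forall i l, U i l != 0 -> vle (g' l) (shift (g i) e)) ->
  (forall l i, W l i != 0 -> vle (g i) (shift (g' l) e)) ->
  (forall j, c j *m U *m gen_mx N g' x' (shift (r j) e) = 0) ->
  (forall j, c' j *m W *m gen_mx M g x (shift (r' j) e) = 0) ->
  (forall i, row i (1%:M - U *m W) *m gen_mx M g x (shift (shift (g i) e) e) = 0) ->
  (forall l, row l (1%:M - W *m U) *m gen_mx N g' x' (shift (shift (g' l) e) e) = 0) ->
  interleaved M N e.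
Proof.
move=> e0 Mp Np U_supp W_supp U_rel W_rel UW WU; split=> //.
exists (coef_mor x x' e U), (coef_mor x' x e W); split.
- by move=> a b; apply: (coef_mor_nat Mp U_supp U_rel).
- by move=> a b; apply: (coef_mor_nat Np W_supp W_rel).
- exact: (coef_mor_comp e0 Mp Np U_supp W_supp U_rel W_rel UW).
- exact: (coef_mor_comp e0 Np Mp W_supp U_supp W_rel U_rel WU).
Qed.

End Presentations.

Arguments gen_mx {k R n} M {p} g x a.
Arguments is_pres {k R n} M {p q} g x r c.
Arguments mask_mx {k R n p} g a.

Section Interleavings.
Variables (k : fieldType) (R : realType) (n : nat).
Local Notation pt := (pt R n).
Local Notation pmod := (pmod k R n).

Lemma interleaved_refl (M : pmod) : interleaved M M 0.
Proof.
have a0 (a : pt) : vle a (shift a 0) by apply: vle_shiftr.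
have s0 (a b : pt) : vle a b -> vle (shift a 0) (shift b 0) by move/vle_shift; apply.
split=> //; exists (fun a => pmap M a (shift a 0)), (fun a => pmap M a (shift a 0)).
by split=> [a b ab|a b ab|a|a]; rewrite !pmap_comp ?a0 ?s0 // (vle_trans ab (a0 b)).
Qed.

Lemma interleaved_sym (M N : pmod) e : interleaved M N e -> interleaved N M e.
Proof. by case=> e0 [f [g [fN gN fg gf]]]; split=> //; exists g, f. Qed.

Lemma dI_le (M N : pmod) e : interleaved M N e -> (dI M N <= e%:E)%E.
Proof. by move=> MNe; apply: ereal_inf_lbound; exists e. Qed.

Lemma close_interleaved (M N : pmod) p q (g g' : 'I_p -> pt) x x' (r r' : 'I_q -> pt) c e :
  0 <= e -> is_pres M g x r c -> is_pres N g' x' r' c ->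
  (forall i, vle (g' i) (shift (g i) e)) -> (forall i, vle (g i) (shift (g' i) e)) ->
  (forall j, vle (r' j) (shift (r j) e)) -> (forall j, vle (r j) (shift (r' j) e)) ->
  interleaved M N e.
Proof.
move=> e0 Mp Np gg' g'g rr' r'r.
apply: (coef_interleaved (U := 1%:M) (W := 1%:M) e0 Mp Np).
- by move=> i l /mx1_nz ->.
- by move=> l i /mx1_nz ->.
- by move=> j; rewrite mulmx1 (pres_rel Np).
- by move=> j; rewrite mulmx1 (pres_rel Mp).
- by move=> i; rewrite mulmx1 subrr row0 mul0mx.
- by move=> l; rewrite mulmx1 subrr row0 mul0mx.
Qed.

End Interleavings.

(** * Lengths of paths *)

Section Paths.
Variables (k : fieldType) (R : realType) (n : nat).
Local Notation pmod := (pmod k R n).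

Lemma dI_le_plength (gam : R -> pmod) (M N : pmod) :
  gam 0 = M -> gam 1 = N -> (dI M N <= plength gam)%E.
Proof.
move=> <- <-; apply: ereal_sup_ubound; exists 1%N, (fun i => if i == 0%N then 0 else 1); split=> //.
  by move=> i; rewrite ltnS leqn0 => /eqP ->; rewrite ler01.
by rewrite big_nat1.
Qed.

Section Lipschitz.
Variables (gam : R -> pmod) (L : R).
Hypothesis gam_lip : forall s t, 0 <= s <= 1 -> 0 <= t <= 1 ->
  (dI (gam s) (gam t) <= (`|s - t| * L)%:E)%E.

Lemma lipschitz_path_in (P : pmod -> Prop) :
  0 <= L -> (forall t, 0 <= t <= 1 -> P (gam t)) -> path_in P gam.
Proof.
move=> L0 gamP; split=> // t ht eps eps0.
have L1 : 0 < L + 1 by rewrite ltr_wpDl.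
exists (eps / (L + 1)); first by rewrite divr_gt0.
move=> s hs st; apply: le_lt_trans (gam_lip hs ht) _; rewrite lte_fin.
apply: le_lt_trans (_ : `|s - t| * (L + 1) < eps).
  by rewrite ler_wpM2l // lerDl.
by rewrite -ltr_pdivlMr.
Qed.

Lemma plength_le_lipschitz : (plength gam <= L%:E)%E.
Proof.
apply/ereal_supP => _ [m [t [t0 tm t_mono ->]]].
have t_le i j : (i <= j)%N -> (j <= m)%N -> t i <= t j.
  move=> ij; rewrite -(subnK ij); elim: (j - i)%N => [|d IHd]; first by rewrite add0n.
  by rewrite addSn => dm; apply: le_trans (IHd (ltnW dm)) (t_mono _ dm).
have t01 i : (i <= m)%N -> 0 <= t i <= 1.
  by move=> im; rewrite -t0 -tm !t_le.
suff partial j : (j <= m)%N ->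
    (\sum_(0 <= i < j) dI (gam (t i)) (gam (t i.+1)) <= ((t j - t 0) * L)%:E)%E.
  by move/(_ m (leqnn m)): partial; rewrite tm t0 subr0 mul1r.
elim: j => [|j IHj] jm; first by rewrite big_geq // subrr mul0r.
rewrite big_nat_recr //= (_ : (t j.+1 - t 0) * L = (t j - t 0) * L + (t j.+1 - t j) * L);
  last by ring.
rewrite EFinD; apply: leeD; first exact: IHj (ltnW jm).
apply: le_trans (gam_lip (t01 _ (ltnW jm)) (t01 _ jm)) _.
by rewrite lee_fin distrC ger0_norm // subr_ge0; apply: t_mono.
Qed.

End Lipschitz.
End Paths.

(** * Modules presented by arbitrary data *)

Section PresentedModule.
Variables (k : fieldType) (R : realType) (n : nat).
Local Notation pt := (pt R n).
Local Notation pmod := (pmod k R n).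
Variables (p q : nat) (G : 'I_p -> pt) (Rg : 'I_q -> pt) (C : 'I_q -> 'rV[k]_p).

Definition coker_rel a : 'M[k]_p := cokermx (rel_mx Rg C a).
Definition gen_span a : 'M[k]_p := mask_mx G a *m coker_rel a.
Definition span_base a := row_base (gen_span a).
Definition span_map a b : 'M[k]_(\rank (gen_span a), \rank (gen_span b)) :=
  span_base a *m pinvmx (coker_rel a) *m coker_rel b *m pinvmx (span_base b).

Lemma rel_mx_mono a b : vle a b -> (rel_mx Rg C a <= rel_mx Rg C b)%MS.
Proof.
move=> ab; apply/row_subP => j; rewrite row_rel_mx.
case: ifPn => ja; last exact: sub0mx.
by have := row_rel_mx Rg C b j; rewrite (vle_trans ja ab) => <-; apply: row_sub.
Qed.

Lemma coker_rel_mono a b : vle a b -> coker_rel a *m pinvmx (coker_rel a) *m coker_rel b = coker_rel b.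
Proof.
move=> ab; set L := coker_rel a.
have : (L *m pinvmx L - 1%:M <= rel_mx Rg C a)%MS.
  by rewrite submxE mulmxBl mulmxKpV // mul1mx subrr.
move/submx_trans/(_ (rel_mx_mono ab)).
by rewrite submxE mulmxBl mul1mx subr_eq0 => /eqP.
Qed.

Lemma span_base_push a b : vle a b ->
  (span_base a *m pinvmx (coker_rel a) *m coker_rel b <= span_base b)%MS.
Proof.
move=> ab; have /submxP [D ->] : (span_base a <= gen_span a)%MS by rewrite eq_row_base.
have push : gen_span a *m pinvmx (coker_rel a) *m coker_rel b = mask_mx G a *m gen_span b.
  by rewrite /gen_span -!(mulmxA (mask_mx G a)) coker_rel_mono // mulmxA mask_mx_mono.
by rewrite -2!mulmxA [X in D *m X]mulmxA push mulmxA eq_row_base submxMl.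
Qed.

Lemma span_map_id a : span_map a a = 1%:M.
Proof.
rewrite /span_map mulmxKpV ?mulmxVp ?row_base_free //.
by rewrite eq_row_base submxMl.
Qed.

Lemma span_map_comp a b c : vle a b -> vle b c ->
  span_map a b *m span_map b c = span_map a c.
Proof.
move=> ab bc; rewrite /span_map 3!mulmxA (mulmxKpV (span_base_push ab)).
by rewrite -2!(mulmxA (span_base a *m _)) coker_rel_mono.
Qed.

(* The module at a is the span of the generators of grade <= a in k^p modulo
   the relations of grade <= a, in the coordinates of the basis [span_base a]. *)
Definition pres_mod : pmod := PMod span_map_id span_map_comp.

Definition pres_gen i : 'rV[k]_(pdim pres_mod (G i)) :=
  row i (coker_rel (G i)) *m pinvmx (span_base (G i)).

Lemma gen_mx_pres_mod a : gen_mx pres_mod G pres_gen a = gen_span a *m pinvmx (span_base a).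
Proof.
apply/row_matrixP => i; rewrite row_gen_mx row_mul /gen_span row_mask_mx.
case: ifPn => ia; last by rewrite !mul0mx.
have ei : (row i (coker_rel (G i)) <= span_base (G i))%MS.
  by rewrite /span_base eq_row_base -(row_mask_mx_id G i) row_sub.
rewrite /= /span_map 3!mulmxA (mulmxKpV ei) rowE -2!(mulmxA 'e_i).
by rewrite coker_rel_mono // rowE.
Qed.

Hypothesis C_supp : forall j i, C j 0 i != 0 -> vle (G i) (Rg j).

Lemma pres_mod_is_pres : is_pres pres_mod G pres_gen Rg C.
Proof.
split=> // [a|a v v_supp]; rewrite gen_mx_pres_mod.
  apply/row_fullP; have /submxP [D DE] : (span_base a <= gen_span a)%MS by rewrite eq_row_base.
  exists D.
  by rewrite mulmxA -DE mulmxVp ?row_base_free.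
have vmask : v *m mask_mx G a = v by apply: mask_mx_idr => i l; rewrite [i]ord1 => /v_supp.
have vL : v *m gen_span a = v *m coker_rel a by rewrite /gen_span mulmxA vmask.
rewrite submxE mulmxA; split=> [v0|/eqP vL0]; last by rewrite vL vL0 mul0mx.
have sub : (v *m gen_span a <= span_base a)%MS by rewrite /span_base eq_row_base submxMl.
by rewrite -vL -(mulmxKpV sub) v0 mul0mx.
Qed.

End PresentedModule.

(** * The interpolating path *)

Section CoefMatrix.
Variables (k : fieldType) (R : realType) (n : nat).
Local Notation pt := (pt R n).
Local Notation pmod := (pmod k R n).
Variables (M N : pmod) (p p' : nat) (g : 'I_p -> pt) (x : forall i, 'rV[k]_(pdim M (g i)))
  (g' : 'I_p' -> pt) (x' : forall l, 'rV[k]_(pdim N (g' l))) (e : R)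
  (h : forall a, 'M[k]_(pdim M a, pdim N (shift a e))).
Hypotheses (N_full : forall a, row_full (gen_mx N g' x' a))
  (h_nat : forall a b, vle a b -> h a *m pmap N (shift a e) (shift b e) = pmap M a b *m h b).

Definition coef_mx : 'M[k]_(p, p') :=
  \matrix_i (x i *m h (g i) *m pinvmx (gen_mx N g' x' (shift (g i) e))
               *m mask_mx g' (shift (g i) e)).

Lemma row_coef_mx i : row i coef_mx =
  x i *m h (g i) *m pinvmx (gen_mx N g' x' (shift (g i) e)) *m mask_mx g' (shift (g i) e).
Proof. exact: rowK. Qed.

Lemma row_coef_mx_mask i :
  row i coef_mx *m mask_mx g' (shift (g i) e) = row i coef_mx.
Proof. by rewrite row_coef_mx -mulmxA mask_mx_id. Qed.

Lemma coef_mx_supp i l : coef_mx i l != 0 -> vle (g' l) (shift (g i) e).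
Proof.
by move=> il; apply: (mask_mx_supp (i := 0) (row_coef_mx_mask i)); rewrite mxE.
Qed.

Lemma row_coef_mx_gen i : row i coef_mx *m gen_mx N g' x' (shift (g i) e) = x i *m h (g i).
Proof. by rewrite row_coef_mx -mulmxA mask_gen_mx mulmxKpV ?submx_full. Qed.

Lemma mask_coef_mx_gen a :
  mask_mx g a *m coef_mx *m gen_mx N g' x' (shift a e) = gen_mx M g x a *m h a.
Proof.
apply/row_matrixP => i; rewrite [LHS]row_mul row_mask_mx [RHS]row_mul row_gen_mx.
case: ifPn => [gi|_]; last by rewrite !mul0mx.
rewrite -mulmxA -h_nat // mulmxA -row_coef_mx_gen.
by rewrite (gen_mx_push_mask _ (row_coef_mx_mask i)) // vle_shift.
Qed.

Lemma coef_mx_rel q (r : 'I_q -> pt) c : is_pres M g x r c ->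
  forall j, c j *m coef_mx *m gen_mx N g' x' (shift (r j) e) = 0.
Proof.
move=> Mp j; rewrite -(pres_rel_mask Mp (vle_refl (r j))) -2!mulmxA.
by rewrite (mulmxA (mask_mx g _)) mask_coef_mx_gen mulmxA (pres_rel Mp (vle_refl _)) mul0mx.
Qed.

End CoefMatrix.

Lemma coef_mx_comp (k : fieldType) (R : realType) (n : nat) (M N : pmod k R n) p q p' q'
    (g : 'I_p -> pt R n) x (r : 'I_q -> pt R n) c (g' : 'I_p' -> pt R n) x'
    (r' : 'I_q' -> pt R n) c' (e : R) f g0 :
  0 <= e -> is_pres M g x r c -> is_pres N g' x' r' c' ->
  (forall a b, vle a b -> f a *m pmap N (shift a e) (shift b e) = pmap M a b *m f b) ->
  (forall a b, vle a b -> g0 a *m pmap M (shift a e) (shift b e) = pmap N a b *m g0 b) ->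
  (forall a, f a *m g0 (shift a e) = pmap M a (shift (shift a e) e)) ->
  forall i,
  row i (1%:M - coef_mx x x' f *m coef_mx x' x g0) *m
    gen_mx M g x (shift (shift (g i) e) e) = 0.
Proof.
move=> e0 Mp Np f_nat g_nat gf i.
set A := coef_mx x x' f; set B := coef_mx x' x g0.
suff AB : row i A *m (B *m gen_mx M g x (shift (shift (g i) e) e)) =
          row i (gen_mx M g x (shift (shift (g i) e) e)).
  by rewrite rowE mulmxBr mulmx1 mulmxBl -!rowE row_mul -mulmxA AB subrr.
rewrite -row_coef_mx_mask -mulmxA (mulmxA (mask_mx g' _)).
rewrite (mask_coef_mx_gen x' (pres_full Mp) g_nat) mulmxA.
rewrite (row_coef_mx_gen x f (pres_full Np)) -mulmxA gf row_gen_mx.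
by rewrite shiftD vle_shiftr ?addr_ge0.
Qed.

Section Interpolation.
Variables (k : fieldType) (R : realType) (n : nat).
Local Notation pt := (pt R n).
Local Notation pmod := (pmod k R n).
Variables (M N : pmod) (pM qM pN qN : nat)
  (gM : 'I_pM -> pt) (xM : forall i, 'rV[k]_(pdim M (gM i))) (rM : 'I_qM -> pt)
  (cM : 'I_qM -> 'rV[k]_pM)
  (gN : 'I_pN -> pt) (xN : forall j, 'rV[k]_(pdim N (gN j))) (rN : 'I_qN -> pt)
  (cN : 'I_qN -> 'rV[k]_pN)
  (e : R) (f : forall a, 'M[k]_(pdim M a, pdim N (shift a e)))
  (g : forall a, 'M[k]_(pdim N a, pdim M (shift a e))).
Hypotheses (Mp : is_pres M gM xM rM cM) (Np : is_pres N gN xN rN cN) (e0 : 0 <= e)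
  (f_nat : forall a b, vle a b -> f a *m pmap N (shift a e) (shift b e) = pmap M a b *m f b)
  (g_nat : forall a b, vle a b -> g a *m pmap M (shift a e) (shift b e) = pmap N a b *m g b)
  (gf : forall a, f a *m g (shift a e) = pmap M a (shift (shift a e) e))
  (fg : forall a, g a *m f (shift a e) = pmap N a (shift (shift a e) e)).

Local Notation A := (coef_mx xM xN f).
Local Notation B := (coef_mx xN xM g).

Definition interp_gen (t : R) : 'I_(pM + pN) -> pt :=
  sum_fun (fun i => shift (gM i) (t * e)) (fun j => shift (gN j) ((1 - t) * e)).

Definition interp_rel (t : R) : 'I_(qM + qN + (pM + pN)) -> pt :=
  sum_fun (sum_fun (fun j => shift (rM j) (t * e)) (fun j => shift (rN j) ((1 - t) * e)))
          (sum_fun (fun i => shift (gM i) ((2 - t) * e)) (fun j => shift (gN j) ((1 + t) * e))).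

(* The relations of M, those of N, and the identifications of the generators
   of M and of N with their images under f and g. *)
Definition interp_relmx : 'M[k]_(qM + qN + (pM + pN), pM + pN) :=
  col_mx (block_mx (\matrix_j cM j) 0 0 (\matrix_j cN j)) (block_mx 1%:M (- A) (- B) 1%:M).

Definition interp_coef m := row m interp_relmx.

Definition interp t := pres_mod (interp_gen t) (interp_rel t) interp_coef.
Definition interp_x t := pres_gen (interp_gen t) (interp_rel t) interp_coef.

Lemma interp_coef_relM j : interp_coef (lshift _ (lshift qN j)) = row_mx (cM j) 0.
Proof. by rewrite /interp_coef rowKu /block_mx rowKu row_row_mx rowK row0. Qed.

Lemma interp_coef_relN j : interp_coef (lshift _ (rshift qM j)) = row_mx 0 (cN j).
Proof. by rewrite /interp_coef rowKu /block_mx rowKd row_row_mx rowK row0. Qed.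

Lemma interp_coef_genM i : interp_coef (rshift _ (lshift pN i)) = row_mx 'e_i (- row i A).
Proof. by rewrite /interp_coef rowKd /block_mx rowKu row_row_mx row1 !rowE mulmxN. Qed.

Lemma interp_coef_genN j : interp_coef (rshift _ (rshift pM j)) = row_mx (- row j B) 'e_j.
Proof. by rewrite /interp_coef rowKd /block_mx rowKd row_row_mx row1 !rowE mulmxN. Qed.

Lemma interp_coef_supp (t : R) : 0 <= t <= 1 ->
  forall m l, interp_coef m 0 l != 0 -> vle (interp_gen t l) (interp_rel t m).
Proof.
case/andP=> t0 t1; case: Mp => cM_supp _ _; case: Np => cN_supp _ _ m l.
have le_MN_l : t * e <= (2 - t) * e by rewrite ler_wpM2r //; lra.
have le_MN_r : (1 - t) * e + e <= (2 - t) * e.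
  by rewrite -[X in _ + X]mul1r -mulrDl ler_wpM2r //; lra.
have le_NM_l : t * e + e <= (1 + t) * e.
  by rewrite -[X in _ + X]mul1r -mulrDl ler_wpM2r //; lra.
have le_NM_r : (1 - t) * e <= (1 + t) * e by rewrite ler_wpM2r //; lra.
rewrite /interp_gen /interp_rel.
elim/split_ord_ind: m => m; elim/split_ord_ind: m => j; elim/split_ord_ind: l => i;
  rewrite ?interp_coef_relM ?interp_coef_relN ?interp_coef_genM ?interp_coef_genN;
  rewrite ?row_mxEl ?row_mxEr ?(sum_fun_l, sum_fun_r) ?[(0 : 'rV__) _ _]mxE ?eqxx //.
- by move/cM_supp/vle_shift; apply.
- by move/cN_supp/vle_shift; apply.
- by move/delta_nz ->; apply: vle_shift (vle_refl _) le_MN_l.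
- by rewrite mxE oppr_eq0 mxE => /coef_mx_supp/vle_shiftl/(_ le_MN_r).
- by rewrite mxE oppr_eq0 mxE => /coef_mx_supp/vle_shiftl/(_ le_NM_l).
- by move/delta_nz ->; apply: vle_shift (vle_refl _) le_NM_r.
Qed.

Lemma interp_is_pres (t : R) : 0 <= t <= 1 ->
  is_pres (interp t) (interp_gen t) (interp_x t) (interp_rel t) interp_coef.
Proof. by move/interp_coef_supp; apply: pres_mod_is_pres. Qed.

Lemma interleaved_interp (s t : R) : 0 <= s <= 1 -> 0 <= t <= 1 ->
  interleaved (interp s) (interp t) (`|s - t| * e).
Proof.
move=> hs ht; have d0 : 0 <= `|s - t| * e by rewrite mulr_ge0.
have close (a : pt) (u v : R) : u - v = s - t \/ u - v = t - s ->
    vle (shift a (u * e)) (shift (shift a (v * e)) (`|s - t| * e)).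
  move=> uv; rewrite shiftD -mulrDl; apply: vle_shift (vle_refl a) _.
  rewrite ler_wpM2r //; have := ler_norm (s - t); have := ler_norm (t - s).
  by rewrite distrC; case: uv; lra.
apply: (close_interleaved d0 (interp_is_pres hs) (interp_is_pres ht)).
- by elim/split_ord_ind => i; rewrite /interp_gen ?(sum_fun_l, sum_fun_r);
    apply: close; [right | left]; ring.
- by elim/split_ord_ind => i; rewrite /interp_gen ?(sum_fun_l, sum_fun_r);
    apply: close; [left | right]; ring.
- by elim/split_ord_ind; elim/split_ord_ind => j; rewrite /interp_rel ?(sum_fun_l, sum_fun_r);
    apply: close; [right | left | left | right]; ring.
- by elim/split_ord_ind; elim/split_ord_ind => j; rewrite /interp_rel ?(sum_fun_l, sum_fun_r);
    apply: close; [left | right | right | left]; ring.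
Qed.

Lemma interleaved_interp_M (t : R) : 0 <= t <= 1 -> interleaved M (interp t) (t * e).
Proof.
move=> ht; have /andP [t0 t1] := ht; have te0 : 0 <= t * e by rewrite mulr_ge0.
have Pt := interp_is_pres ht.
apply: (coef_interleaved (U := row_mx 1%:M 0) (W := col_mx 1%:M B) te0 Mp Pt).
- move=> i; elim/split_ord_ind => l; rewrite ?row_mxEl ?row_mxEr.
    by move/mx1_nz ->; rewrite /interp_gen sum_fun_l vle_refl.
  by rewrite mxE eqxx.
- elim/split_ord_ind => l i; rewrite ?col_mxEu ?col_mxEd /interp_gen ?(sum_fun_l, sum_fun_r).
    by move/mx1_nz ->; rewrite shiftD vle_shiftr ?addr_ge0.
  move/coef_mx_supp/vle_trans; apply; rewrite shiftD -mulrDl subrK mul1r.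
  exact: vle_refl.
- move=> j; rewrite mul_mx_row mulmx1 mulmx0 -interp_coef_relM (pres_rel Pt) //.
  by rewrite /interp_rel !sum_fun_l vle_refl.
- elim/split_ord_ind; elim/split_ord_ind => j;
    rewrite ?interp_coef_relM ?interp_coef_relN ?interp_coef_genM ?interp_coef_genN mul_row_col;
    rewrite /interp_rel ?(sum_fun_l, sum_fun_r).
  + by rewrite mulmx1 mul0mx addr0 (pres_rel Mp) // shiftD vle_shiftr ?addr_ge0.
  + rewrite mul0mx add0r shiftD -mulrDl subrK mul1r.
    exact: (coef_mx_rel (pres_full Mp) g_nat Np).
  + rewrite mulmx1 mulNmx -row_1B shiftD (_ : (2 - t) * e + t * e = e + e); last by ring.
    by rewrite -shiftD (coef_mx_comp e0 Mp Np f_nat g_nat gf).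
  + by rewrite mulmx1 -rowE addNr mul0mx.
- by move=> i; rewrite mul_row_col mulmx1 mul0mx addr0 subrr row0 mul0mx.
- move=> l; rewrite mul_col_row mulmx1 !mulmx0 (scalar_mx_block pM pN 1) opp_block_mx.
  rewrite add_block_mx subrr !subr0 sub0r.
  elim/split_ord_ind: l => l; rewrite /block_mx ?rowKu ?rowKd row_row_mx ?row1 ?row0.
    by rewrite row_mx0 mul0mx.
  rewrite mulmx1 !rowE mulmxN -!rowE -interp_coef_genN (pres_rel Pt) //.
  rewrite /interp_gen /interp_rel !sum_fun_r !shiftD.
  by rewrite (_ : (1 - t) * e + (t * e + t * e) = (1 + t) * e) ?vle_refl //; ring.
Qed.

Lemma interleaved_interp_N (t : R) : 0 <= t <= 1 -> interleaved N (interp t) ((1 - t) * e).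
Proof.
move=> ht; have /andP [t0 t1] := ht.
have te0 : 0 <= (1 - t) * e by rewrite mulr_ge0 ?subr_ge0.
have Pt := interp_is_pres ht.
apply: (coef_interleaved (U := row_mx 0 1%:M) (W := col_mx A 1%:M) te0 Np Pt).
- move=> j; elim/split_ord_ind => l; rewrite ?row_mxEl ?row_mxEr.
    by rewrite mxE eqxx.
  by move/mx1_nz ->; rewrite /interp_gen sum_fun_r vle_refl.
- elim/split_ord_ind => l j; rewrite ?col_mxEu ?col_mxEd /interp_gen ?(sum_fun_l, sum_fun_r).
    move/coef_mx_supp/vle_trans; apply; rewrite shiftD.
    by rewrite (_ : t * e + (1 - t) * e = e) ?vle_refl //; ring.
  by move/mx1_nz ->; rewrite shiftD vle_shiftr ?addr_ge0.
- move=> j; rewrite mul_mx_row mulmx0 mulmx1 -interp_coef_relN (pres_rel Pt) //.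
  by rewrite /interp_rel sum_fun_l sum_fun_r vle_refl.
- elim/split_ord_ind; elim/split_ord_ind => j;
    rewrite ?interp_coef_relM ?interp_coef_relN ?interp_coef_genM ?interp_coef_genN mul_row_col;
    rewrite /interp_rel ?(sum_fun_l, sum_fun_r).
  + rewrite mul0mx addr0 shiftD (_ : t * e + (1 - t) * e = e); last by ring.
    exact: (coef_mx_rel (pres_full Np) f_nat Mp).
  + by rewrite mul0mx add0r mulmx1 (pres_rel Np) // shiftD vle_shiftr ?addr_ge0.
  + by rewrite mulmx1 -rowE addrN mul0mx.
  + rewrite mulmx1 mulNmx [- _ + _]addrC -row_1B shiftD.
    rewrite (_ : (1 + t) * e + (1 - t) * e = e + e); last by ring.
    by rewrite -shiftD (coef_mx_comp e0 Np Mp g_nat f_nat fg).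
- by move=> j; rewrite mul_row_col mul0mx add0r mulmx1 subrr row0 mul0mx.
- move=> l; rewrite mul_col_row !mulmx1 !mulmx0 (scalar_mx_block pM pN 1) opp_block_mx.
  rewrite add_block_mx !subrr subr0 sub0r.
  elim/split_ord_ind: l => l; rewrite /block_mx ?rowKu ?rowKd row_row_mx ?row1 ?row0; last first.
    by rewrite row_mx0 mul0mx.
  rewrite !rowE mulmxN -!rowE -interp_coef_genM (pres_rel Pt) //.
  rewrite /interp_gen /interp_rel sum_fun_l sum_fun_r sum_fun_l !shiftD.
  by rewrite (_ : t * e + ((1 - t) * e + (1 - t) * e) = (2 - t) * e) ?vle_refl //; ring.
Qed.

(* [interp 0] and [interp 1] are only isomorphic to M and N. *)
Definition interp_path (t : R) : pmod :=
  if t <= 0 then M else if 1 <= t then N else interp t.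

Lemma interp_pathE (t : R) : 0 <= t <= 1 ->
  [\/ t = 0 /\ interp_path t = M, t = 1 /\ interp_path t = N | interp_path t = interp t].
Proof.
case/andP=> t0 t1; rewrite /interp_path.
case: ifPn => [t_le0|_]; first by constructor 1; split=> //; apply/le_anti/andP.
case: ifPn => [t_ge1|_]; first by constructor 2; split=> //; apply/le_anti/andP.
by constructor 3.
Qed.

Lemma interp_path_lipschitz (s t : R) : 0 <= s <= 1 -> 0 <= t <= 1 ->
  interleaved (interp_path s) (interp_path t) (`|s - t| * e).
Proof.
have MN : interleaved M N e by split=> //; exists f, g.
move=> hs ht; have /andP [s0 s1] := hs; have /andP [t0 t1] := ht.
case: (interp_pathE hs) => [[-> ->]|[-> ->]|->];
case: (interp_pathE ht) => [[-> ->]|[-> ->]|->].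
- by rewrite subrr normr0 mul0r; apply: interleaved_refl.
- by rewrite sub0r normrN normr1 mul1r.
- by rewrite sub0r normrN ger0_norm //; apply: interleaved_interp_M.
- by rewrite subr0 normr1 mul1r; apply: interleaved_sym.
- by rewrite subrr normr0 mul0r; apply: interleaved_refl.
- by rewrite ger0_norm ?subr_ge0 //; apply: interleaved_interp_N.
- by rewrite subr0 ger0_norm //; apply/interleaved_sym/interleaved_interp_M.
- by rewrite distrC ger0_norm ?subr_ge0 //; apply/interleaved_sym/interleaved_interp_N.
- exact: interleaved_interp.
Qed.

Lemma fin_pres_interp_path (t : R) : 0 <= t <= 1 -> fin_pres (interp_path t).
Proof.
move=> ht; case: (interp_pathE ht) => [[_ ->]|[_ ->]|->]; apply/fin_presP.
- by exists pM, qM, gM, xM, rM, cM.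
- by exists pN, qN, gN, xN, rN, cN.
- by do 6 eexists; apply: interp_is_pres.
Qed.

End Interpolation.

Theorem mainTheorem3 (k : fieldType) (R : realType) (n : nat) (M N : pmod k R n) :
  fin_pres M -> fin_pres N -> (dI M N < +oo)%E ->
  dI M N = ereal_inf [set plength gam | gam in
             [set gam : R -> pmod k R n |
                path_in (@fin_pres k R n) gam /\ gam 0 = M /\ gam 1 = N]].
Proof.
move=> /fin_presP [pM [qM [gM [xM [rM [cM Mp]]]]]].
move=> /fin_presP [pN [qN [gN [xN [rN [cN Np]]]]]] _.
apply/eqP; rewrite eq_le; apply/andP; split.
  by apply/ereal_infP => _ [gam [_ [gam0 gam1]] <-]; apply: dI_le_plength.
apply/ereal_infP => _ [e [e0 [f [g [f_nat g_nat gf fg]]]] <-].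
have gam_lip := interp_path_lipschitz Mp Np e0 f_nat g_nat gf fg.
have dI_lip s t hs ht := dI_le (gam_lip s t hs ht).
apply: le_trans (plength_le_lipschitz dI_lip); apply: ereal_inf_lbound.
exists (interp_path xM rM cM xN rN cN f g) => //; split.
  apply: (lipschitz_path_in dI_lip e0) => t ht.
  exact: fin_pres_interp_path.
by rewrite /interp_path lexx ler10 lexx.
Qed.
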